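(* Let $(G,\tau)$ be a profinite group and $M$ a finite continuous $G$-module, and let $\varphi^2:H^2_{\mathrm{con}}(G,M)\to H^2_{\mathrm{abs}}(G,M)$ be the natural map. Then: (1) $\varphi^2$ is surjective if and only if for every abstract group extension $1\to M\to H\to G\to 1$ (inducing the given action of $G$ on $M$), $H$ admits a profinite group topology whose quotient topology on $G$ is $\tau$. (2) $\varphi^2$ is injective if and only if for every profinite extension $H$ of $G$ by $M$, and every pair of profinite group topologies $T_1,T_2$ on $H$ for which the quotient maps $(H,T_i)\to(G,\tau)$ are continuous, there exists a continuous isomorphism $(H,T_1)\to(H,T_2)$ compatible with the inclusion of $M$ and the quotient map to $G$.
   Context: $H^2_{\mathrm{con}}$ denotes continuous cohomology of the profinite group and $H^2_{\mathrm{abs}}$ the cohomology of the underlying abstract group; $\varphi^2$ is the natural comparison map. *)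

(* for the finite module M (finZmodType); groups and
   topologies on arbitrary carriers are given by honest elementary
   definitions below, since topologies on the same group H must vary. *)
From HB Require Import structures.
From mathcomp Require Import all_boot all_algebra.
From Stdlib Require Import List.

Set Implicit Arguments.
Unset Strict Implicit.
Unset Printing Implicit Defensive.

Import GRing.Theory.
Local Open Scope ring_scope.

Record group_on (T : Type) := GroupOn {
  gmul : T -> T -> T;
  ginv : T -> T;
  gone : T;
  gmulA : forall x y z, gmul x (gmul y z) = gmul (gmul x y) z;
  gmul1 : forall x, gmul gone x = x;
  gmulV : forall x, gmul (ginv x) x = gone
}.

Definition group_hom (A B : Type) (gA : group_on A) (gB : group_on B)
  (f : A -> B) : Prop :=
  forall x y, f (gmul gA x y) = gmul gB (f x) (f y).

Definition topology (T : Type) := (T -> Prop) -> Prop.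

Definition is_topology (T : Type) (op : topology T) : Prop :=
  op (fun _ => True) /\
  (forall (I : Type) (U : I -> T -> Prop),
      (forall i, op (U i)) -> op (fun x => exists i, U i x)) /\
  (forall U V, op U -> op V -> op (fun x => U x /\ V x)).

Definition continuous_top (A B : Type) (oA : topology A) (oB : topology B)
  (f : A -> B) : Prop :=
  forall V, oB V -> oA (fun x => V (f x)).

Definition prod_top (A B : Type) (oA : topology A) (oB : topology B)
  : topology (A * B) :=
  fun W => forall p, W p -> exists U V, oA U /\ oB V /\ U p.1 /\ V p.2 /\
                       (forall a b, U a -> V b -> W (a, b)).

Definition compact_top (T : Type) (op : topology T) : Prop :=
  forall (I : Type) (U : I -> T -> Prop),
    (forall i, op (U i)) -> (forall x, exists i, U i x) ->
    exists s : list I, forall x, exists i, In i s /\ U i x.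

Definition hausdorff_top (T : Type) (op : topology T) : Prop :=
  forall x y, x <> y -> exists U V, op U /\ op V /\ U x /\ V y /\
                                 (forall z, U z -> V z -> False).

Definition connected_in (T : Type) (op : topology T) (S : T -> Prop) : Prop :=
  ~ (exists U V, op U /\ op V /\
       (forall x, S x -> U x \/ V x) /\
       (exists x, S x /\ U x) /\ (exists x, S x /\ V x) /\
       (forall x, S x -> U x -> V x -> False)).

Definition totally_disconnected_top (T : Type) (op : topology T) : Prop :=
  forall S, connected_in op S -> forall x y, S x -> S y -> x = y.

Definition group_topology (T : Type) (gT : group_on T) (op : topology T) : Prop :=
  is_topology op /\
  continuous_top (prod_top op op) op (fun p => gmul gT p.1 p.2) /\
  continuous_top op op (ginv gT).

Definition profinite_topology (T : Type) (gT : group_on T) (op : topology T) : Prop :=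
  group_topology gT op /\ compact_top op /\ hausdorff_top op /\
  totally_disconnected_top op.

Definition quotient_top (H G : Type) (oH : topology H) (p : H -> G) : topology G :=
  fun U => oH (fun h => U (p h)).

Definition is_G_module (G : Type) (gG : group_on G) (M : finZmodType)
  (act : G -> M -> M) : Prop :=
  (forall m, act (gone gG) m = m) /\
  (forall g h m, act (gmul gG g h) m = act g (act h m)) /\
  (forall g m n, act g (m + n) = act g m + act g n).

(* continuity of G x M -> M with M discrete (M finite):
   every preimage of a point is open; for the discrete topology on M this is
   exactly: for all m, m', {g | g.m = m'} is open in G. *)
Definition continuous_action (G : Type) (tau : topology G) (M : finZmodType)
  (act : G -> M -> M) : Prop :=
  forall m m' : M, tau (fun g => act g m = m').

Definition continuous_1cochain (G : Type) (tau : topology G) (M : finZmodType)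
  (c : G -> M) : Prop :=
  forall m : M, tau (fun g => c g = m).

Definition continuous_2cochain (G : Type) (tau : topology G) (M : finZmodType)
  (f : G -> G -> M) : Prop :=
  forall m : M, prod_top tau tau (fun p => f p.1 p.2 = m).

Definition is_2cocycle (G : Type) (gG : group_on G) (M : finZmodType)
  (act : G -> M -> M) (f : G -> G -> M) : Prop :=
  forall g h k, act g (f h k) - f (gmul gG g h) k + f g (gmul gG h k) - f g h = 0.

Definition coboundary1 (G : Type) (gG : group_on G) (M : finZmodType)
  (act : G -> M -> M) (c : G -> M) : G -> G -> M :=
  fun g h => act g (c h) - c (gmul gG g h) + c g.

Definition is_abs_2coboundary (G : Type) (gG : group_on G) (M : finZmodType)
  (act : G -> M -> M) (f : G -> G -> M) : Prop :=
  exists c : G -> M, forall g h, f g h = coboundary1 gG act c g h.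

Definition is_con_2coboundary (G : Type) (gG : group_on G) (tau : topology G)
  (M : finZmodType) (act : G -> M -> M) (f : G -> G -> M) : Prop :=
  exists c : G -> M, continuous_1cochain tau c /\
                     forall g h, f g h = coboundary1 gG act c g h.

(* phi^2 : H^2_con = Z^2_con/B^2_con -> H^2_abs = Z^2_abs/B^2_abs,
   [f]_con |-> [f]_abs. *)
Definition phi2_surjective (G : Type) (gG : group_on G) (tau : topology G)
  (M : finZmodType) (act : G -> M -> M) : Prop :=
  forall f : G -> G -> M, is_2cocycle gG act f ->
    exists f' : G -> G -> M, continuous_2cochain tau f' /\ is_2cocycle gG act f' /\
      is_abs_2coboundary gG act (fun g h => f g h - f' g h).

Definition phi2_injective (G : Type) (gG : group_on G) (tau : topology G)
  (M : finZmodType) (act : G -> M -> M) : Prop :=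
  forall f1 f2 : G -> G -> M,
    continuous_2cochain tau f1 -> is_2cocycle gG act f1 ->
    continuous_2cochain tau f2 -> is_2cocycle gG act f2 ->
    is_abs_2coboundary gG act (fun g h => f1 g h - f2 g h) ->
    is_con_2coboundary gG tau act (fun g h => f1 g h - f2 g h).

Definition is_extension (G : Type) (gG : group_on G) (M : finZmodType)
  (act : G -> M -> M) (H : Type) (gH : group_on H)
  (i : M -> H) (p : H -> G) : Prop :=
  (forall m n, i (m + n) = gmul gH (i m) (i n)) /\
  injective i /\
  group_hom gH gG p /\
  (forall g, exists h, p h = g) /\
  (forall h, p h = gone gG <-> exists m, h = i m) /\
  (forall h m, gmul gH (gmul gH h (i m)) (ginv gH h) = i (act (p h) m)).

From mathcomp Require Import all_boot all_algebra.
From Stdlib Require Import Classical FunctionalExtensionality PropExtensionality ClassicalEpsilon.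

Set Implicit Arguments.
Unset Strict Implicit.
Unset Printing Implicit Defensive.

Import GRing.Theory.
Local Open Scope ring_scope.

(* Choose a set-theoretic section s of p.  Writing h = i (coord h) * s (p h) identifies H with
   M x G, multiplied through the factor set f_s, a 2-cocycle whose abstract class does not
   depend on s.  A profinite topology on H over tau has a continuous section (an open subgroup
   of H meeting i(M) trivially maps homeomorphically onto an open subgroup of G), its factor
   set is then continuous, and the topology is the product topology of M x G carried along s;
   conversely, when f_s is continuous this product topology is a profinite group topology on H.
   So (1) says that every abstract class contains a continuous cocycle.  For (2), two such
   topologies give continuous sections s1, s2 with f_s1 - f_s2 abstractly a coboundary d c;
   the isomorphisms over M and G are the maps i(m) s1(g) |-> i(m + c g) s2(g) with such a c,
   and such a map is continuous exactly when c is. *)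

Lemma pred_ext (T : Type) (U V : T -> Prop) : (forall x, U x <-> V x) -> U = V.
Proof.
by move=> UV; apply: functional_extensionality => x; apply: propositional_extensionality.
Qed.

Lemma In_enum (T : finType) (x : T) : List.In x (enum T).
Proof.
have : x \in enum T by rewrite mem_enum.
elim: (enum T) => [|y s IH] //=; rewrite in_cons => /orP [/eqP ->|/IH]; by [left|right].
Qed.

Section Topology.
Variables (T : Type) (op : topology T).
Hypothesis Hop : is_topology op.

Lemma open_ext (U V : T -> Prop) : (forall x, U x <-> V x) -> op U -> op V.
Proof. by move=> /pred_ext ->. Qed.

Lemma open_setT : op (fun _ => True).
Proof. by case: Hop. Qed.

Lemma open_bigcup (I : Type) (U : I -> T -> Prop) :
  (forall i, op (U i)) -> op (fun x => exists i, U i x).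
Proof. by case: Hop => _ [bigcup _]; apply: bigcup. Qed.

Lemma open_setI (U V : T -> Prop) : op U -> op V -> op (fun x => U x /\ V x).
Proof. by case: Hop => _ [_ setI]; apply: setI. Qed.

Lemma open_setU (U V : T -> Prop) : op U -> op V -> op (fun x => U x \/ V x).
Proof.
move=> oU oV; apply: (open_ext (U := fun x => exists b : bool, (if b then U else V) x)).
  by move=> x; split => [[[] ?]|[?|?]]; [left|right|exists true|exists false].
by apply: open_bigcup => -[].
Qed.

Lemma open_set0 : op (fun _ => False).
Proof.
apply: (open_ext (U := fun x => exists i : False, True)); first by move=> x; split => -[].
exact: open_bigcup.
Qed.

Lemma open_cst (P : Prop) : op (fun _ => P).
Proof.
case: (classic P) => hP.
  by apply: (open_ext (U := fun _ => True)) open_setT.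
by apply: (open_ext (U := fun _ => False)) open_set0.
Qed.

Lemma open_notnot (U : T -> Prop) : op U -> op (fun x => ~ ~ U x).
Proof. by apply: open_ext => x; split => [Ux /(_ Ux)|/NNPP]. Qed.

Lemma open_local (W : T -> Prop) :
  (forall x, W x -> exists U, op U /\ U x /\ forall y, U y -> W y) -> op W.
Proof.
move=> Wloc; pose I := {U : T -> Prop | op U /\ forall y, U y -> W y}.
apply: (open_ext (U := fun x => exists i : I, sval i x)); last by apply: open_bigcup => -[? []].
move=> x; split => [[[U [_ UW]] /= /UW]|/Wloc [U [oU [Ux UW]]]] //.
by exists (exist _ U (conj oU UW)).
Qed.

Lemma open_finite_inter (A : Type) (U : A -> T -> Prop) (s : list A) :
  (forall a, List.In a s -> op (U a)) -> op (fun x => forall a, List.In a s -> U a x).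
Proof.
elim: s => [|a s IH] oU /=.
  by apply: (open_ext (U := fun _ => True)) open_setT.
apply: (open_ext (U := fun x => U a x /\ forall b, List.In b s -> U b x)).
  move=> x; split => [[Ua Us] b [<-|/Us] //|Ux].
  by split => [|b bs]; apply: Ux; [left|right].
by apply: open_setI; [apply: oU; left|apply: IH => b bs; apply: oU; right].
Qed.

Lemma open_finite_union (A : Type) (U : A -> T -> Prop) (s : list A) :
  (forall a, op (U a)) -> op (fun x => exists a, List.In a s /\ U a x).
Proof.
move=> oU; apply: (open_ext (U := fun x => exists i : {a | List.In a s}, U (sval i) x)).
  by move=> x; split => [[[a ?] ?]|[a [sa ?]]]; [exists a|exists (exist _ a sa)].
exact: open_bigcup.
Qed.

Definition compact_set (K : T -> Prop) :=
  forall (I : Type) (U : I -> T -> Prop),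
    (forall i, op (U i)) -> (forall x, K x -> exists i, U i x) ->
    exists s : list I, forall x, K x -> exists i, List.In i s /\ U i x.

Definition clopen (C : T -> Prop) := op C /\ op (fun x => ~ C x).

Lemma compact_closed_subset (F : T -> Prop) :
  compact_top op -> op (fun x => ~ F x) -> compact_set F.
Proof.
move=> cT oF I U oU cov.
pose V (o : option I) := if o is Some i then U i else fun x => ~ F x.
have [l lV] : exists l : list (option I), forall x, exists o, List.In o l /\ V o x.
  apply: cT => [[i|]|x] /=; [exact: oU|exact: oF|].
  by case: (classic (F x)) => [/cov [i Ui]|nFx]; [exists (Some i)|exists None].
exists (List.flat_map (fun o => if o is Some i then cons i nil else nil) l) => x Fx.
have [[i|] [li Ui]] := lV x => //.
by exists i; split=> //; apply/List.in_flat_map; exists (Some i); split=> //; left.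
Qed.

Lemma hausdorff_separate_point_compact (K : T -> Prop) x :
  hausdorff_top op -> compact_set K -> ~ K x ->
  exists U V, op U /\ op V /\ U x /\ (forall y, K y -> V y) /\
    (forall z, U z -> V z -> False).
Proof.
move=> hT cK nKx.
pose I := {UV : (T -> Prop) * (T -> Prop) |
   op UV.1 /\ op UV.2 /\ UV.1 x /\ forall z, UV.1 z -> UV.2 z -> False}.
have [l lK] : exists l : list I, forall y, K y -> exists i, List.In i l /\ (sval i).2 y.
  apply: cK => [[UV [? []]] //|y Ky].
  have [|U [V [oU [oV [Ux [Vy dUV]]]]]] := hT x y; first by move=> xy; rewrite xy in nKx.
  by exists (exist _ (U, V) (conj oU (conj oV (conj Ux dUV)))).
exists (fun z => forall i, List.In i l -> (sval i).1 z).
exists (fun z => exists i, List.In i l /\ (sval i).2 z).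
split; first by apply: open_finite_inter => -[UV []].
split; first by apply: open_finite_union => -[UV [? []]].
split; first by move=> [UV [? [? []]]].
split=> // z Uz [[UV [? [? [? dUV]]]] [li Vz]].
exact: dUV z (Uz _ li) Vz.
Qed.

Lemma compact_closed (K : T -> Prop) :
  hausdorff_top op -> compact_set K -> op (fun x => ~ K x).
Proof.
move=> hT cK; apply: open_local => x nKx.
have [U [V [oU [_ [Ux [KV dUV]]]]]] := hausdorff_separate_point_compact hT cK nKx.
by exists U; split=> //; split=> // y Uy /KV; apply: dUV.
Qed.

Lemma hausdorff_separate_compact (A B : T -> Prop) :
  hausdorff_top op -> compact_set A -> compact_set B ->
  (forall x, A x -> B x -> False) ->
  exists OA OB, op OA /\ op OB /\ (forall x, A x -> OA x) /\
    (forall x, B x -> OB x) /\ (forall z, OA z -> OB z -> False).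
Proof.
move=> hT cA cB dAB.
pose I := {UV : (T -> Prop) * (T -> Prop) | op UV.1 /\ op UV.2 /\
   (forall y, B y -> UV.2 y) /\ forall z, UV.1 z -> UV.2 z -> False}.
have [l lA] : exists l : list I, forall y, A y -> exists i, List.In i l /\ (sval i).1 y.
  apply: cA => [[UV [? []]] //|y Ay].
  have nBy : ~ B y by apply: dAB.
  have [U [V [oU [oV [Uy [BV dUV]]]]]] := hausdorff_separate_point_compact hT cB nBy.
  by exists (exist _ (U, V) (conj oU (conj oV (conj BV dUV)))).
exists (fun z => exists i, List.In i l /\ (sval i).1 z).
exists (fun z => forall i, List.In i l -> (sval i).2 z).
split; first by apply: open_finite_union => -[UV []].
split; first by apply: open_finite_inter => -[UV [? []]].
split=> //; split; first by move=> y By [UV /= [_ [_ [BV _]]]] _; apply: BV.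
move=> z [i [li Uz]] Vz; case: (proj2_sig i) => _ [_ [_ dUV]].
exact: dUV z Uz (Vz _ li).
Qed.

Lemma clopen_finite_inter (l : list {C : T -> Prop | clopen C}) :
  clopen (fun y => forall i, List.In i l -> sval i y).
Proof.
split; first by apply: open_finite_inter => -[C [? ?]].
apply: (open_ext (U := fun y => exists i, List.In i l /\ ~ sval i y)).
  move=> y; split => [[i [li nCy]] Cy|nC]; first exact/nCy/Cy.
  apply: NNPP => nE; apply: nC => i li; apply: NNPP => nCy; apply: nE; exists i; tauto.
by apply: open_finite_union => -[C [? ?]].
Qed.

Lemma clopen_nbhd_avoiding x (R : T -> Prop) :
  compact_top op -> op (fun y => ~ R y) ->
  (forall y, R y -> exists C, clopen C /\ C x /\ ~ C y) ->
  exists C, clopen C /\ C x /\ forall y, C y -> ~ R y.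
Proof.
move=> cT oR sepR.
pose I := {C : T -> Prop | clopen C /\ C x}.
have [l lR] : exists l : list I, forall y, R y -> exists i, List.In i l /\ ~ sval i y.
  apply: (compact_closed_subset cT oR) => [[C [[? oC] _]] //|y /sepR [C [cC [Cx nCy]]]].
  by exists (exist _ C (conj cC Cx)).
pose l' := List.map (fun i : I => exist clopen (sval i) (proj2_sig i).1) l.
exists (fun y => forall i, List.In i l' -> sval i y); split; first exact: clopen_finite_inter.
split=> [[C cC] /List.in_map_iff [[C' [cC' C'x]] [/= [<-] _]] //|y Cy /lR [i [li nCy]]].
by apply: nCy; apply: (Cy (exist _ (sval i) (proj2_sig i).1)); apply/List.in_map_iff; exists i.
Qed.

End Topology.

Section CompactHausdorff.
Variables (T : Type) (op : topology T).
Hypotheses (Hop : is_topology op) (cT : compact_top op) (hT : hausdorff_top op).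

Definition quasi_component x y := forall C, clopen op C -> C x -> C y.

Lemma open_not_quasi_component x : op (fun y => ~ quasi_component x y).
Proof.
apply: (open_ext (U := fun y => exists i : {C | clopen op C /\ C x}, ~ sval i y)) => //.
  move=> y; split => [[[C [cC Cx]] /= nCy] /(_ C cC Cx) //|nQ].
  apply: NNPP => nE; apply: nQ => C cC Cx; apply: NNPP => nCy; apply: nE.
  by exists (exist _ C (conj cC Cx)).
by apply: (open_bigcup Hop) => -[C /= [[_ ?] _]].
Qed.

Lemma quasi_component_one_side x (O1 O2 : T -> Prop) :
  op O1 -> op O2 -> (forall z, O1 z -> O2 z -> False) ->
  (forall y, quasi_component x y -> O1 y \/ O2 y) ->
  (forall y, quasi_component x y -> O1 y) \/ (forall y, quasi_component x y -> O2 y).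
Proof.
move=> oO1 oO2 dO cov.
have [C [[oC oCc] [Cx CO]]] : exists C, clopen op C /\ C x /\
    forall y, C y -> ~ ~ (O1 y \/ O2 y).
  apply: (clopen_nbhd_avoiding Hop) => //; first exact: (open_notnot (open_setU Hop oO1 oO2)).
  move=> y nOy; apply: NNPP => nC; apply: nOy; apply: cov => C cC Cx.
  by apply: NNPP => nCy; apply: nC; exists C.
have clopen_side (O O' : T -> Prop) : op O -> op O' ->
    (forall y, C y -> O y \/ O' y) -> (forall z, O z -> O' z -> False) ->
    clopen op (fun y => C y /\ O y).
  move=> oO oO' COO' dOO'; split; first exact: (open_setI Hop).
  apply: (open_ext (U := fun y => ~ C y \/ O' y)); last exact: (open_setU Hop).
  move=> y; split => [[nCy [/nCy]|O'y [_ /dOO'/(_ O'y)]] //|nCO].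
  by case: (classic (C y)) => Cy; [right; case: (COO' y Cy) => // Oy; case: nCO|left].
have COO y : C y -> O1 y \/ O2 y by move/CO/NNPP.
have [O1x|O2x] : O1 x \/ O2 x by apply: cov.
  by left => y /(_ _ (clopen_side _ _ oO1 oO2 COO dO) (conj Cx O1x)) [].
right => y /(_ _ (clopen_side _ _ oO2 oO1 _ _) (conj Cx O2x)) [] //.
- by move=> z /COO [];[right|left].
- by move=> z O2z O1z; apply: dO O1z O2z.
Qed.

Lemma quasi_component_connected x : connected_in op (quasi_component x).
Proof.
move=> [U1 [U2 [oU1 [oU2 [cov [[a [Qa U1a]] [[b [Qb U2b]] dU]]]]]]].
pose A y := quasi_component x y /\ ~ U2 y.
pose B y := quasi_component x y /\ ~ U1 y.
have closed_part (U : T -> Prop) : op U ->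
    compact_set op (fun y => quasi_component x y /\ ~ U y).
  move=> oU; apply: compact_closed_subset => //.
  apply: (open_ext (U := fun y => ~ quasi_component x y \/ U y)).
    move=> y; split => [[nQ [/nQ]|Uy [_ /(_ Uy)]] //|nP].
    case: (classic (quasi_component x y)) => Qy; [right|by left].
    by apply: NNPP => nUy; apply: nP.
  by apply: (open_setU Hop) => //; exact: open_not_quasi_component.
have cA : compact_set op A by apply: closed_part oU2.
have cB : compact_set op B by apply: closed_part oU1.
have dAB z : A z -> B z -> False by move=> [Qz nU2] [_ nU1]; case: (cov z Qz).
have [OA [OB [oOA [oOB [AOA [BOB dO]]]]]] := hausdorff_separate_compact Hop hT cA cB dAB.
have QO y : quasi_component x y -> OA y \/ OB y.
  move=> Qy; case: (cov y Qy) => Uy; [left; apply: AOA|right; apply: BOB].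
    by split=> // /(dU y Qy Uy).
  by split=> // /dU/(_ Uy); apply.
have [QOA|QOB] := quasi_component_one_side oOA oOB dO QO.
  by apply: (dO b) (QOA b Qb) _; apply: BOB; split=> // /(dU b Qb)/(_ U2b).
by apply: (dO a) _ (QOB a Qa); apply: AOA; split=> // /(dU a Qa U1a).
Qed.

Lemma clopen_nbhd (V : T -> Prop) x :
  totally_disconnected_top op -> op V -> V x ->
  exists C, clopen op C /\ C x /\ forall y, C y -> V y.
Proof.
move=> tdT oV Vx.
have [C [cC [Cx CV]]] : exists C, clopen op C /\ C x /\ forall y, C y -> ~ ~ V y.
  apply: (clopen_nbhd_avoiding Hop) => //; first exact: open_notnot.
  move=> y nVy; apply: NNPP => nC.
  have Qy : quasi_component x y.
    by move=> C cC Cx; apply: NNPP => nCy; apply: nC; exists C.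
  by apply: nVy; rewrite (tdT _ (quasi_component_connected (x := x)) y x Qy).
by exists C; split=> //; split=> // y /CV/NNPP.
Qed.

End CompactHausdorff.

Section GroupLaws.
Variables (T : Type) (g : group_on T).
Local Notation "x * y" := (gmul g x y).
Local Notation "x ^-1" := (ginv g x).
Local Notation "1" := (gone g).

Lemma gmulKg a x : a^-1 * (a * x) = x.
Proof. by rewrite gmulA gmulV gmul1. Qed.

Lemma gidem1 y : y * y = y -> y = 1.
Proof. by move=> yy; rewrite -(gmulKg y y) yy gmulV. Qed.

Lemma gmulgV x : x * x^-1 = 1.
Proof. by apply: gidem1; rewrite -gmulA (gmulA g x^-1) gmulV gmul1. Qed.

Lemma gmulg1 x : x * 1 = x.
Proof. by rewrite -(gmulV g x) gmulA gmulgV gmul1. Qed.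

Lemma gmulKVg a x : a * (a^-1 * x) = x.
Proof. by rewrite gmulA gmulgV gmul1. Qed.

Lemma gmulgK a x : x * a * a^-1 = x.
Proof. by rewrite -gmulA gmulgV gmulg1. Qed.

Lemma gmulgKV a x : x * a^-1 * a = x.
Proof. by rewrite -gmulA gmulV gmulg1. Qed.

Lemma gmulgI a x y : a * x = a * y -> x = y.
Proof. by move=> axy; rewrite -(gmulKg a x) axy gmulKg. Qed.

Lemma gmulIg a x y : x * a = y * a -> x = y.
Proof. by move=> xay; rewrite -(gmulgK a x) xay gmulgK. Qed.

Lemma ginv_unique x y : x * y = 1 -> y = x^-1.
Proof. by move=> xy; apply: (gmulgI (a := x)); rewrite xy gmulgV. Qed.

Lemma ginvK x : (x^-1)^-1 = x.
Proof. by apply/esym/ginv_unique; rewrite gmulV. Qed.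

Lemma ginvM x y : (x * y)^-1 = y^-1 * x^-1.
Proof. by apply/esym/ginv_unique; rewrite -gmulA (gmulA g y) gmulgV gmul1 gmulgV. Qed.

Lemma ginv1 : 1^-1 = 1.
Proof. by apply/esym/ginv_unique; rewrite gmul1. Qed.

End GroupLaws.

Lemma continuous_comp (A B C : Type) (oA : topology A) (oB : topology B) (oC : topology C)
  (f : A -> B) (h : B -> C) :
  continuous_top oA oB f -> continuous_top oB oC h -> continuous_top oA oC (fun x => h (f x)).
Proof. by move=> cf ch V /ch /cf. Qed.

Lemma continuous_id (A : Type) (oA : topology A) : continuous_top oA oA (fun x => x).
Proof. by []. Qed.

Lemma continuous_cst (A B : Type) (oA : topology A) (oB : topology B) (b : B) :
  is_topology oA -> continuous_top oA oB (fun _ => b).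
Proof. by move=> hA V _; apply: open_cst. Qed.

Lemma prod_top_topology (A B : Type) (oA : topology A) (oB : topology B) :
  is_topology oA -> is_topology oB -> is_topology (prod_top oA oB).
Proof.
move=> hA hB; split.
  move=> q _; exists (fun _ => True), (fun _ => True).
  by split; [exact: open_setT|split; [exact: open_setT|]].
split.
  move=> I U oU q [j /(oU j) [V1 [V2 [o1 [o2 [V1q [V2q V12]]]]]]].
  by exists V1, V2; do 4!split=> //; move=> a b V1a V2b; exists j; apply: V12.
move=> U V oU oV q [/oU [U1 [U2 [o1 [o2 [? [? U12]]]]]] /oV [V1 [V2 [o3 [o4 [? [? V12]]]]]]].
exists (fun a => U1 a /\ V1 a), (fun b => U2 b /\ V2 b).
split; first exact: open_setI.
split; first exact: open_setI.
by do 2!split=> //; move=> a b [? ?] [? ?]; split; [apply: U12|apply: V12].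
Qed.

Lemma continuous_pair (X A B : Type) (oX : topology X) (oA : topology A) (oB : topology B)
  (f1 : X -> A) (f2 : X -> B) : is_topology oX ->
  continuous_top oX oA f1 -> continuous_top oX oB f2 ->
  continuous_top oX (prod_top oA oB) (fun x => (f1 x, f2 x)).
Proof.
move=> hX c1 c2 W oW; apply: (open_local hX) => x /oW [U [V [oU [oV [Ux [Vx UVW]]]]]].
exists (fun y => U (f1 y) /\ V (f2 y)).
by split; [apply: (open_setI hX); [apply: c1|apply: c2]|split=> // y []; apply: UVW].
Qed.

Lemma continuous_fst (A B : Type) (oA : topology A) (oB : topology B) :
  is_topology oB -> continuous_top (prod_top oA oB) oA fst.
Proof.
by move=> hB V oV q Vq; exists V, (fun _ => True); do 2!split=> //; exact: open_setT.
Qed.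

Lemma continuous_snd (A B : Type) (oA : topology A) (oB : topology B) :
  is_topology oA -> continuous_top (prod_top oA oB) oB snd.
Proof.
by move=> hA V oV q Vq; exists (fun _ => True), V; split; [exact: open_setT|].
Qed.

Lemma continuous_image_connected (A B : Type) (oA : topology A) (oB : topology B)
  (f : A -> B) S :
  continuous_top oA oB f -> connected_in oA S ->
  connected_in oB (fun y => exists x, S x /\ f x = y).
Proof.
move=> cf cS [U [V [oU [oV [cov [[_ [[a [Sa <-]] Ufa]] [[_ [[b [Sb <-]] Vfb]] dUV]]]]]]].
apply: cS; exists (fun z => U (f z)), (fun z => V (f z)).
split; first exact: cf.
split; first exact: cf.
split; first by move=> z Sz; apply: cov; exists z.
split; first by exists a.
split; first by exists b.
by move=> z Sz; apply: dUV; exists z.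
Qed.

Lemma compact_image (A B : Type) (oA : topology A) (oB : topology B) (f : A -> B) K :
  continuous_top oA oB f -> compact_set oA K ->
  compact_set oB (fun y => exists x, K x /\ f x = y).
Proof.
move=> cf cK I U oU cov.
have [l lK] : exists l : list I, forall x, K x -> exists j, List.In j l /\ U j (f x).
  by apply: (cK I (fun j x => U j (f x))) => [j|x Kx]; [apply/cf/oU|apply: cov; exists x].
by exists l => y [x [/lK ? <-]].
Qed.

Section GroupTopology.
Variables (T : Type) (gT : group_on T) (op : topology T).
Hypothesis Hg : group_topology gT op.
Local Notation "x * y" := (gmul gT x y).
Local Notation "x ^-1" := (ginv gT x).
Local Notation "1" := (gone gT).

Lemma group_topology_topology : is_topology op.
Proof. by case: Hg. Qed.

Lemma continuous_gmul (X : Type) (oX : topology X) (f1 f2 : X -> T) : is_topology oX ->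
  continuous_top oX op f1 -> continuous_top oX op f2 ->
  continuous_top oX op (fun x => f1 x * f2 x).
Proof.
move=> hX c1 c2; apply: (continuous_comp (h := fun q => q.1 * q.2) (continuous_pair hX c1 c2)).
by case: Hg => _ [].
Qed.

Lemma continuous_ginv : continuous_top op op (ginv gT).
Proof. by case: Hg => _ []. Qed.

Lemma continuous_gmull a : continuous_top op op (fun x => a * x).
Proof.
have hT := group_topology_topology.
apply: (continuous_gmul (f1 := fun _ => a) (f2 := id)) => //; exact: continuous_cst.
Qed.

Lemma continuous_gmulr a : continuous_top op op (fun x => x * a).
Proof.
have hT := group_topology_topology.
apply: (continuous_gmul (f1 := id) (f2 := fun _ => a)) => //; exact: continuous_cst.
Qed.

Lemma compact_open_right_stable (K : T -> Prop) :
  compact_set op K -> op K ->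
  exists N, op N /\ N 1 /\ forall k n, K k -> N n -> K (k * n).
Proof.
move=> cK oK.
have cmul : continuous_top (prod_top op op) op (fun q => q.1 * q.2) by case: Hg => _ [].
pose I := {AB : (T -> Prop) * (T -> Prop) | op AB.1 /\ op AB.2 /\ AB.2 1 /\
            forall a b, AB.1 a -> AB.2 b -> K (a * b)}.
have [l lK] : exists l : list I, forall k, K k -> exists i, List.In i l /\ (sval i).1 k.
  apply: cK => [[AB [? _]] //|k Kk].
  have Kk1 : K ((k, 1).1 * (k, 1).2) by rewrite /= gmulg1.
  have [A [B [oA [oB [Ak [B1 AB]]]]]] := cmul K oK (k, 1) Kk1.
  by exists (exist _ (A, B) (conj oA (conj oB (conj B1 AB)))).
exists (fun n => forall i, List.In i l -> (sval i).2 n).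
split.
  by apply: (open_finite_inter group_topology_topology) => i _; case: (proj2_sig i) => _ [].
split; first by move=> i _; case: (proj2_sig i) => _ [_ []].
move=> k n /lK [i [li Aik]] Nn; case: (proj2_sig i) => _ [_ [_ AB]].
exact: AB _ _ Aik (Nn _ li).
Qed.

Lemma open_subgroup_nbhd (V : T -> Prop) :
  compact_top op -> hausdorff_top op -> totally_disconnected_top op ->
  op V -> V 1 ->
  exists U, op U /\ U 1 /\ (forall x y, U x -> U y -> U (x * y)) /\
    (forall x, U x -> U x^-1) /\ (forall x, U x -> V x).
Proof.
move=> cT hT tdT oV V1; have hTop := group_topology_topology.
have [K [[oK oKc] [K1 KV]]] := clopen_nbhd hTop cT hT tdT oV V1.
have [N [oN [N1 KN]]] := compact_open_right_stable (compact_closed_subset cT oKc) oK.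
pose U x := forall k, K k -> K (k * x) /\ K (k * x^-1).
have NU w : N w -> N w^-1 -> U w by move=> Nw Nw' k Kk; split; apply: KN.
have Umul x y : U x -> U y -> U (x * y).
  move=> Ux Uy k Kk; split; first by rewrite gmulA; apply: (Uy _ (Ux _ Kk).1).1.
  by rewrite ginvM gmulA; apply: (Ux _ (Uy _ Kk).2).2.
exists U; split.
  apply: (open_local hTop) => x Ux.
  exists (fun y => N (x^-1 * y) /\ N (x^-1 * y)^-1); split.
    apply: (open_setI hTop); first exact: continuous_gmull.
    exact/(continuous_comp (continuous_gmull x^-1) continuous_ginv).
  split; first by rewrite gmulV ginv1.
  move=> y [Nxy Nxy']; rewrite -(gmulKVg gT x y); exact: Umul Ux (NU _ Nxy Nxy').
split; first by move=> k Kk; rewrite ginv1 gmulg1.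
split=> //; split; first by move=> x Ux k Kk; rewrite ginvK; case: (Ux k Kk).
by move=> x Ux; apply: KV; rewrite -(gmul1 gT x); apply: (Ux _ K1).1.
Qed.

End GroupTopology.

Section GModule.
Variables (G : Type) (gG : group_on G) (M : finZmodType) (act : G -> M -> M).
Hypothesis Hmod : is_G_module gG act.
Local Notation "x * y" := (gmul gG x y).

Lemma act1 m : act (gone gG) m = m. Proof. by case: Hmod. Qed.
Lemma actM g h m : act (g * h) m = act g (act h m). Proof. by case: Hmod => _ []. Qed.
Lemma actD g m n : act g (m + n) = act g m + act g n. Proof. by case: Hmod => _ []. Qed.

Lemma act0 g : act g 0 = 0.
Proof. by apply: (@addrI _ (act g 0)); rewrite -actD !addr0. Qed.

Lemma actN g m : act g (- m) = - act g m.
Proof. by apply/eqP; rewrite -subr_eq0 opprK -actD addNr act0. Qed.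

Lemma actB g m n : act g (m - n) = act g m - act g n.
Proof. by rewrite actD actN. Qed.

Lemma actVK g m : act (ginv gG g) (act g m) = m.
Proof. by rewrite -actM gmulV act1. Qed.

Lemma is_2cocycleP (f : G -> G -> M) : is_2cocycle gG act f <->
  forall g h k, f g h + f (g * h) k = act g (f h k) + f g (h * k).
Proof.
split=> fP g h k; last by rewrite (addrAC (act g (f h k))) -fP addrK subrr.
by move/eqP: (fP g h k); rewrite subr_eq0 => /eqP <-; rewrite (addrAC (act g _)) subrK.
Qed.

Lemma coboundary1N (c : G -> M) g h :
  coboundary1 gG act (fun g => - c g) g h = - coboundary1 gG act c g h.
Proof. by rewrite /coboundary1 actN !opprD. Qed.

End GModule.

Section Extension.
Variables (G : Type) (gG : group_on G) (M : finZmodType) (act : G -> M -> M).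
Hypothesis Hmod : is_G_module gG act.
Variables (H : Type) (gH : group_on H) (i : M -> H) (p : H -> G).
Hypothesis Hext : is_extension gG act gH i p.
Local Notation "x ** y" := (gmul gH x y) (at level 40, left associativity).
Local Notation gm := (gmul gG).

Lemma iD m n : i (m + n) = i m ** i n. Proof. by case: Hext. Qed.
Lemma i_inj : injective i. Proof. by case: Hext => _ []. Qed.
Lemma pM x y : p (x ** y) = gm (p x) (p y). Proof. by case: Hext => _ [_ []]. Qed.
Lemma p_surj g : exists h, p h = g. Proof. by case: Hext => _ [_ [_ []]]. Qed.
Lemma p_ker h : p h = gone gG <-> exists m, h = i m.
Proof. by case: Hext => _ [_ [_ [_ []]]]. Qed.

Lemma i0 : i 0 = gone gH.
Proof. by apply: gidem1; rewrite -iD addr0. Qed.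

Lemma iN m : i (- m) = ginv gH (i m).
Proof. by apply: ginv_unique; rewrite -iD subrr i0. Qed.

Lemma p1 : p (gone gH) = gone gG.
Proof. by apply: gidem1; rewrite -pM gmul1. Qed.

Lemma pV h : p (ginv gH h) = ginv gG (p h).
Proof. by apply: ginv_unique; rewrite -pM gmulgV p1. Qed.

Lemma p_i m : p (i m) = gone gG.
Proof. by apply/p_ker; exists m. Qed.

Lemma p_imul m x : p (i m ** x) = p x.
Proof. by rewrite pM p_i gmul1. Qed.

Lemma mul_i h m : h ** i m = i (act (p h) m) ** h.
Proof. by case: Hext => _ [_ [_ [_ [_ <-]]]]; rewrite gmulgKV. Qed.

Lemma section_exists : exists s : G -> H, forall g, p (s g) = g.
Proof.
exists (fun g => epsilon (inhabits (gone gH)) (fun h => p h = g)) => g.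
exact: (epsilon_spec (inhabits (gone gH)) (fun h => p h = g) (p_surj g)).
Qed.

Lemma same_fiber x y : p x = p y -> exists m, y = x ** i m.
Proof.
move=> pxy; have [m xy] : exists m, ginv gH x ** y = i m.
  by have [m ->] := proj1 (p_ker (ginv gH x ** y)) ltac:(by rewrite pM pV pxy gmulV); exists m.
by exists m; rewrite -xy gmulKVg.
Qed.

Section Coordinates.
Variable s : G -> H.
Hypothesis Hs : forall g, p (s g) = g.

Definition coord (h : H) : M :=
  epsilon (inhabits 0) (fun m => i m = h ** ginv gH (s (p h))).

Lemma coord_decomp h : h = i (coord h) ** s (p h).
Proof.
have [m hsm] := same_fiber (x := s (p h)) (y := h) (Hs _).
have -> : i (coord h) = h ** ginv gH (s (p h)).
  apply: (epsilon_spec (inhabits 0) (fun m => i m = h ** ginv gH (s (p h)))).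
  by exists (act (p h) m); rewrite {2}hsm mul_i Hs gmulgK.
by rewrite gmulgKV.
Qed.

Lemma p_ims m g : p (i m ** s g) = g.
Proof. by rewrite p_imul Hs. Qed.

Lemma coord_ims m g : coord (i m ** s g) = m.
Proof.
have ims := coord_decomp (i m ** s g); rewrite p_ims in ims.
exact/esym/i_inj/(gmulIg ims).
Qed.

Lemma coord_section g : coord (s g) = 0.
Proof. by rewrite -(coord_ims 0 g) i0 gmul1. Qed.

Lemma eq_coord x y : p x = p y -> coord x = coord y -> x = y.
Proof. by move=> pxy cxy; rewrite (coord_decomp x) (coord_decomp y) pxy cxy. Qed.

Lemma coord_imul m x : coord (i m ** x) = m + coord x.
Proof. by rewrite {1}(coord_decomp x) gmulA -iD coord_ims. Qed.

Definition factor_set g h := coord (s g ** s h).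

Lemma factor_setE g h : s g ** s h = i (factor_set g h) ** s (gm g h).
Proof. by rewrite {1}(coord_decomp (s g ** s h)) pM !Hs. Qed.

Lemma coord_mul x y :
  coord (x ** y) = coord x + act (p x) (coord y) + factor_set (p x) (p y).
Proof.
suff -> : x ** y = i (coord x + act (p x) (coord y) + factor_set (p x) (p y)) **
                   s (gm (p x) (p y)) by rewrite coord_ims.
rewrite {1}(coord_decomp x) {1}(coord_decomp y).
rewrite -(gmulA gH (i (coord x))) (gmulA gH (s (p x))) mul_i Hs.
by rewrite -gmulA factor_setE !gmulA !iD.
Qed.

Lemma factor_set_cocycle : is_2cocycle gG act factor_set.
Proof.
apply/(is_2cocycleP gG act) => g h k.
have := congr1 coord (gmulA gH (s g) (s h) (s k)).
by rewrite !coord_mul !pM !Hs !coord_section !(act0 Hmod) !addr0 !add0r.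
Qed.

Lemma coord1 : coord (gone gH) = - factor_set (gone gG) (gone gG).
Proof.
have s1 : s (gone gG) = i (- coord (gone gH)).
  rewrite iN; apply: (gmulgI (g := gH) (a := i (coord (gone gH)))).
  by rewrite gmulgV -p1 -coord_decomp.
by rewrite /factor_set {1}s1 coord_ims opprK.
Qed.

End Coordinates.

Lemma factor_set_change (s1 s2 : G -> H) :
  (forall g, p (s1 g) = g) -> (forall g, p (s2 g) = g) ->
  forall g h, factor_set s1 g h =
    factor_set s2 g h + coboundary1 gG act (fun g => coord s2 (s1 g)) g h.
Proof.
move=> Hs1 Hs2 g h; have := congr1 (coord s2) (factor_setE Hs1 g h).
rewrite coord_mul // coord_imul // !Hs1 /coboundary1 => fsE.
by rewrite -[factor_set s1 g h](addrK (coord s2 (s1 (gm g h)))) -fsE [LHS](AC 4 (3*(2*4*1))).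
Qed.

Lemma factor_set_shift (s : G -> H) (c : G -> M) : (forall g, p (s g) = g) ->
  forall g h, factor_set (fun g => i (c g) ** s g) g h =
              factor_set s g h + coboundary1 gG act c g h.
Proof.
move=> Hs g h; rewrite (factor_set_change (s2 := s) (fun g => p_ims Hs (c g) g) Hs).
by rewrite /coboundary1 !coord_ims.
Qed.

Lemma factor_set_hom (s : G -> H) (F : H -> H) :
  (forall g, p (s g) = g) -> group_hom gH gH F ->
  (forall m, F (i m) = i m) -> (forall h, p (F h) = p h) ->
  factor_set (fun g => F (s g)) = factor_set s.
Proof.
move=> Hs Fhom Fi pF; apply: functional_extensionality => g.
apply: functional_extensionality => h; have HFs x : p (F (s x)) = x by rewrite pF.
rewrite /factor_set (factor_setE Hs) coord_ims //.
have -> : F (s g) ** F (s h) = i (factor_set s g h) ** F (s (gm g h)).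
  by rewrite -Fhom (factor_setE Hs) Fhom Fi.
exact: (coord_ims HFs).
Qed.

Section Transport.
Variables (s1 s2 : G -> H) (c : G -> M).
Hypotheses (Hs1 : forall g, p (s1 g) = g) (Hs2 : forall g, p (s2 g) = g).
Hypothesis fs12 : forall g h,
  factor_set s1 g h = factor_set s2 g h + coboundary1 gG act c g h.

Definition transport (t1 t2 : G -> H) (d : G -> M) (h : H) : H :=
  i (coord t1 h + d (p h)) ** t2 (p h).

Local Notation F := (transport s1 s2 c).

Lemma p_transport h : p (F h) = p h.
Proof. exact: p_ims. Qed.

Lemma coord_transport h : coord s2 (F h) = coord s1 h + c (p h).
Proof. exact: coord_ims. Qed.

Lemma transportK : cancel F (transport s2 s1 (fun g => - c g)).
Proof.
move=> h; apply: (eq_coord Hs1); first by rewrite p_ims // p_transport.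
by rewrite coord_ims // p_transport coord_transport addrK.
Qed.

Lemma transportKV : cancel (transport s2 s1 (fun g => - c g)) F.
Proof.
move=> h; apply: (eq_coord Hs2); first by rewrite p_transport p_ims.
by rewrite coord_transport coord_ims // p_ims // subrK.
Qed.

Lemma transport_hom : group_hom gH gH F.
Proof.
move=> x y; apply: (eq_coord Hs2); first by rewrite !(pM, p_transport).
rewrite (coord_transport (x ** y)) (coord_mul Hs1) (coord_mul Hs2) !p_transport.
rewrite !coord_transport (actD Hmod) pM fs12.
rewrite /coboundary1 (addrAC _ (- _)) 2!addrA subrK.
by rewrite [LHS](AC (3*2) ((1*5)*(2*4)*3)).
Qed.

Lemma transport_i m : F (i m) = i m.
Proof.
apply: (eq_coord Hs2); first by rewrite p_transport.
rewrite coord_transport -[i m](gmulg1 gH) !coord_imul // !coord1 // p_imul p1.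
by rewrite fs12 /coboundary1 gmul1 (act1 Hmod) subrK opprD addrA subrK.
Qed.

End Transport.

End Extension.

Definition locally_constant (X B : Type) (oX : topology X) (phi : X -> B) :=
  forall b, oX (fun x => phi x = b).

Section LocallyConstant.
Variables (X : Type) (oX : topology X).
Hypothesis hX : is_topology oX.

Lemma locally_constant_ext (B : Type) (phi psi : X -> B) :
  (forall x, phi x = psi x) -> locally_constant oX psi -> locally_constant oX phi.
Proof. by move=> phipsi; have -> : phi = psi by apply: functional_extensionality. Qed.

Lemma locally_constant_cst (B : Type) (b0 : B) : locally_constant oX (fun _ => b0).
Proof. by move=> b; apply: open_cst. Qed.

Lemma locally_constant_comp (Y B : Type) (oY : topology Y) (psi : X -> Y) (phi : Y -> B) :
  continuous_top oX oY psi -> locally_constant oY phi ->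
  locally_constant oX (fun x => phi (psi x)).
Proof. by move=> cpsi lphi b; apply: (cpsi (fun y => phi y = b)). Qed.

Lemma locally_constant_neq (B : Type) (phi : X -> B) b :
  locally_constant oX phi -> oX (fun x => phi x <> b).
Proof.
move=> lphi; apply: (open_ext (U := fun x => exists b', b' <> b /\ phi x = b')).
  by move=> x; split => [[b' [b'b ->]]|]; last exists (phi x).
apply: (open_bigcup hX) => b'; case: (classic (b' = b)) => [->|b'b].
  by apply: (open_ext (U := fun _ => False)) (open_set0 hX) => x; split => // -[].
by apply: open_ext (lphi b') => x; split => [|[]].
Qed.

Lemma locally_constant_add (V : zmodType) (phi psi : X -> V) :
  locally_constant oX phi -> locally_constant oX psi ->
  locally_constant oX (fun x => phi x + psi x).
Proof.
move=> lphi lpsi v; apply: (open_ext (U := fun x => exists a, phi x = a /\ psi x = v - a)).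
  move=> x; split => [[a [-> ->]]|<-]; first by rewrite addrC subrK.
  by exists (phi x); rewrite addrC addKr.
by apply: (open_bigcup hX) => a; apply: (open_setI hX).
Qed.

Lemma locally_constant_opp (V : zmodType) (phi : X -> V) :
  locally_constant oX phi -> locally_constant oX (fun x => - phi x).
Proof.
by move=> lphi v; apply: open_ext (lphi (- v)) => x; split => [->|<-]; rewrite opprK.
Qed.

End LocallyConstant.

Section SectionTopology.
Variables (G : Type) (gG : group_on G) (tau : topology G) (M : finZmodType).
Variable act : G -> M -> M.
Hypotheses (Htau : profinite_topology gG tau) (Hmod : is_G_module gG act).
Hypothesis Hcont : continuous_action tau act.
Variables (H : Type) (gH : group_on H) (i : M -> H) (p : H -> G).
Hypothesis Hext : is_extension gG act gH i p.
Local Notation "x ** y" := (gmul gH x y) (at level 40, left associativity).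
Local Notation gm := (gmul gG).

Lemma profinite_topology_group : group_topology gG tau. Proof. by case: Htau. Qed.
Lemma profinite_topology_topology : is_topology tau. Proof. by case: Htau => -[]. Qed.

Lemma locally_constant_act (X : Type) (oX : topology X) (psi : X -> G) (phi : X -> M) :
  is_topology oX -> continuous_top oX tau psi -> locally_constant oX phi ->
  locally_constant oX (fun x => act (psi x) (phi x)).
Proof.
move=> hX cpsi lphi m.
apply: (open_ext (U := fun x => exists a, phi x = a /\ act (psi x) a = m)).
  by move=> x; split => [[a [-> ->]]|<-]; last exists (phi x).
by apply: (open_bigcup hX) => a; apply: (open_setI hX) => //; exact: (cpsi _ (Hcont a m)).
Qed.

Lemma locally_constant_2cochain (X : Type) (oX : topology X) (f : G -> G -> M)
  (psi1 psi2 : X -> G) :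
  is_topology oX -> continuous_2cochain tau f ->
  continuous_top oX tau psi1 -> continuous_top oX tau psi2 ->
  locally_constant oX (fun x => f (psi1 x) (psi2 x)).
Proof. by move=> hX cf c1 c2 m; apply: (continuous_pair hX c1 c2 (cf m)). Qed.

Section FromSection.
Variable s : G -> H.
Hypothesis Hs : forall g, p (s g) = g.

(* The product topology of M x G (M discrete), carried to H along h |-> (coord h, p h). *)
Definition section_top : topology H := fun W => forall m, tau (fun g => W (i m ** s g)).

Lemma section_top_topology : is_topology section_top.
Proof.
have htau := profinite_topology_topology.
split; first by move=> m; exact: open_setT.
split; first by move=> I U oU m; apply: (open_bigcup htau) => j; apply: oU.
by move=> U V oU oV m; apply: (open_setI htau).
Qed.

Lemma continuous_to_section_top (X : Type) (oX : topology X) (phi : X -> M) (psi : X -> G) :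
  is_topology oX -> locally_constant oX phi -> continuous_top oX tau psi ->
  continuous_top oX section_top (fun x => i (phi x) ** s (psi x)).
Proof.
move=> hX lphi cpsi W oW.
apply: (open_ext (U := fun x => exists m, phi x = m /\ W (i m ** s (psi x)))).
  by move=> x; split => [[m [-> ?]]|?]; last exists (phi x).
by apply: (open_bigcup hX) => m; apply: (open_setI hX) => //; apply: (cpsi _ (oW m)).
Qed.

Lemma continuous_to_section_top_coord (X : Type) (oX : topology X) (F : X -> H) :
  is_topology oX -> locally_constant oX (fun x => coord gH i p s (F x)) ->
  continuous_top oX tau (fun x => p (F x)) -> continuous_top oX section_top F.
Proof.
move=> hX lF cpF.
have -> : F = (fun x => i (coord gH i p s (F x)) ** s (p (F x))).
  by apply: functional_extensionality => x; rewrite -(coord_decomp Hext Hs).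
exact: continuous_to_section_top.
Qed.

Lemma continuous_p_section_top : continuous_top section_top tau p.
Proof. by move=> U oU m; apply: open_ext oU => g; rewrite (p_ims Hext Hs). Qed.

Lemma locally_constant_coord_section_top : locally_constant section_top (coord gH i p s).
Proof.
move=> m n; apply: (open_ext (U := fun _ => n = m)).
  by move=> g; rewrite (coord_ims Hext Hs).
exact: (open_cst profinite_topology_topology).
Qed.

Lemma continuous_section_section_top : continuous_top tau section_top s.
Proof.
apply: continuous_to_section_top_coord profinite_topology_topology _ _.
  apply: (locally_constant_ext (psi := fun _ => 0)); first exact: (coord_section Hext Hs).
  exact: (locally_constant_cst profinite_topology_topology).
have -> : (fun g => p (s g)) = (fun g => g) by apply: functional_extensionality.
exact: continuous_id.
Qed.

Lemma quotient_section_top U : quotient_top section_top p U <-> tau U.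
Proof.
have ims m : (fun g => U (p (i m ** s g))) = U.
  by apply: functional_extensionality => g; rewrite (p_ims Hext Hs).
by rewrite /quotient_top /section_top; split => [/(_ 0)|tU m]; rewrite ims.
Qed.

Section ContinuousFactorSet.
Hypothesis Hf : continuous_2cochain tau (factor_set gH i p s).
Local Notation coords := (coord gH i p s).
Local Notation fs := (factor_set gH i p s).

Lemma continuous_gmul_section_top :
  continuous_top (prod_top section_top section_top) section_top (fun q => q.1 ** q.2).
Proof.
have hT := section_top_topology; have hP := prod_top_topology hT hT.
have cp1 := continuous_comp (continuous_fst hT) continuous_p_section_top.
have cp2 := continuous_comp (continuous_snd hT) continuous_p_section_top.
apply: continuous_to_section_top_coord => //; last first.
  have -> : (fun x : H * H => p (x.1 ** x.2)) = (fun x => gm (p x.1) (p x.2)).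
    by apply: functional_extensionality => x; rewrite (pM Hext).
  exact: (continuous_gmul profinite_topology_group hP cp1 cp2).
apply: (locally_constant_ext (psi := fun q : H * H =>
  coords q.1 + act (p q.1) (coords q.2) + fs (p q.1) (p q.2))).
  by move=> q; rewrite (coord_mul Hext Hs).
have lc_coord := locally_constant_coord_section_top.
apply: locally_constant_add => //; first apply: locally_constant_add => //.
- exact: locally_constant_comp (continuous_fst hT) lc_coord.
- exact: locally_constant_act cp1 (locally_constant_comp (continuous_snd hT) lc_coord).
- exact: locally_constant_2cochain cp1 cp2.
Qed.

Lemma continuous_ginv_section_top : continuous_top section_top section_top (ginv gH).
Proof.
have hT := section_top_topology; have gt := profinite_topology_group.
have cpV := continuous_comp continuous_p_section_top (continuous_ginv gt).
apply: continuous_to_section_top_coord => //; last first.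
  have -> : (fun x => p (ginv gH x)) = (fun x => ginv gG (p x)).
    by apply: functional_extensionality => x; rewrite (pV Hext).
  exact: cpV.
apply: (locally_constant_ext (psi := fun x =>
  act (ginv gG (p x)) (coords (gone gH) - coords x - fs (p x) (ginv gG (p x))))).
  move=> x; have := coord_mul Hext Hs x (ginv gH x).
  rewrite gmulgV (pV Hext) => ->.
  by rewrite (addrAC (coords x + _)) addrK (addrC (coords x)) addrK (actVK Hmod).
apply: locally_constant_act => //.
apply: locally_constant_add => //; last apply: locally_constant_opp.
  apply: locally_constant_add => //; first exact: (locally_constant_cst hT).
  exact: (locally_constant_opp locally_constant_coord_section_top).
exact: locally_constant_2cochain continuous_p_section_top cpV.
Qed.

Lemma section_top_group : group_topology gH section_top.
Proof.
split; first exact: section_top_topology.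
by split; [exact: continuous_gmul_section_top|exact: continuous_ginv_section_top].
Qed.

End ContinuousFactorSet.

Lemma section_top_compact : compact_top section_top.
Proof.
case: Htau => _ [cG _] I U oU cov.
have fiber_cover m : exists l : list I, forall g, exists j, List.In j l /\ U j (i m ** s g).
  by apply: cG => [j|g]; [apply: oU|apply: cov].
pose L m := epsilon (inhabits nil)
  (fun l : list I => forall g, exists j, List.In j l /\ U j (i m ** s g)).
exists (List.flat_map L (enum M)) => x.
have [j [Lj Uj]] := epsilon_spec (inhabits nil) _ (fiber_cover (coord gH i p s x)) (p x).
exists j; split; last by rewrite -(coord_decomp Hext Hs) in Uj.
by apply/List.in_flat_map; exists (coord gH i p s x); split=> //; apply: In_enum.
Qed.

Lemma section_top_hausdorff : hausdorff_top section_top.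
Proof.
case: Htau => _ [_ [hG _]] x y xy.
have lc_coord := locally_constant_coord_section_top.
case: (classic (p x = p y)) => [pxy|/hG [U [V [oU [oV [Ux [Vy dUV]]]]]]].
  pose cx := coord gH i p s x; pose cy := coord gH i p s y.
  exists (fun h => coord gH i p s h = cx), (fun h => coord gH i p s h = cy).
  do 4!split=> //; move=> z -> czy.
  by apply: xy; apply: (eq_coord Hext Hs).
exists (fun h => U (p h)), (fun h => V (p h)).
split; first exact: continuous_p_section_top.
split; first exact: continuous_p_section_top.
by do 2!split=> //; move=> z; apply: dUV.
Qed.

Lemma section_top_totally_disconnected : totally_disconnected_top section_top.
Proof.
case: Htau => _ [_ [_ tdG]] S cS x y Sx Sy.
have hT := section_top_topology.
have lc_coord := locally_constant_coord_section_top.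
apply: (eq_coord Hext Hs).
  apply: (tdG _ (continuous_image_connected continuous_p_section_top cS)).
    by exists x.
  by exists y.
apply: NNPP => cxy; apply: cS.
pose cx := coord gH i p s x.
exists (fun h => coord gH i p s h = cx), (fun h => coord gH i p s h <> cx).
split=> //; split; first exact: locally_constant_neq.
split; first by move=> z _; apply: classic.
split; first by exists x.
split; first by exists y; split=> // cyx; apply: cxy.
by move=> z _ ->.
Qed.

Lemma section_top_profinite :
  continuous_2cochain tau (factor_set gH i p s) -> profinite_topology gH section_top.
Proof.
move=> Hf; split; first exact: section_top_group.
split; first exact: section_top_compact.
by split; [exact: section_top_hausdorff|exact: section_top_totally_disconnected].
Qed.

End FromSection.

End SectionTopology.

Section ProfiniteExtension.
Variables (G : Type) (gG : group_on G) (tau : topology G) (M : finZmodType).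
Variable act : G -> M -> M.
Hypotheses (Htau : profinite_topology gG tau) (Hmod : is_G_module gG act).
Variables (H : Type) (gH : group_on H) (i : M -> H) (p : H -> G).
Hypothesis Hext : is_extension gG act gH i p.
Variable T : topology H.
Hypotheses (HT : profinite_topology gH T) (Hpc : continuous_top T tau p).
Local Notation "x ** y" := (gmul gH x y) (at level 40, left associativity).
Local Notation gm := (gmul gG).

Let gtT : group_topology gH T. Proof. by case: HT. Qed.
Let hT : is_topology T. Proof. by case: HT => -[]. Qed.
Let htau : is_topology tau. Proof. exact: profinite_topology_topology Htau. Qed.

Lemma nbhd_meeting_M_trivially : exists V, T V /\ V (gone gH) /\ forall m, V (i m) -> m = 0.
Proof.
case: HT => _ [_ [hausT _]].
have avoid (m : M) : exists V, T V /\ V (gone gH) /\ (m <> 0 -> ~ V (i m)).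
  case: (classic (m = 0)) => [->|m0].
    by exists (fun _ => True); do !split=> //; exact: open_setT.
  have [|V [W [oV [_ [V1 [Wm dVW]]]]]] := hausT (gone gH) (i m).
    by move=> im; apply/m0/(i_inj Hext); rewrite -im (i0 Hext).
  by exists V; do 2!split=> //; move=> _ /dVW; apply.
pose V m := epsilon (inhabits (fun _ : H => True))
  (fun V => T V /\ V (gone gH) /\ (m <> 0 -> ~ V (i m))).
have Vspec m : T (V m) /\ V m (gone gH) /\ (m <> 0 -> ~ V m (i m)).
  exact: epsilon_spec (avoid m).
exists (fun h => forall m, List.In m (enum M) -> V m h).
split; first by apply: (open_finite_inter hT) => m _; case: (Vspec m).
split; first by move=> m _; case: (Vspec m) => _ [].
move=> m Vm; apply: NNPP => m0; have [_ [_ /(_ m0)]] := Vspec m; apply.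
exact/Vm/In_enum.
Qed.

Lemma open_map_p V : T V -> tau (fun g => exists h, V h /\ p h = g).
Proof.
case: HT => _ [cT _]; case: Htau => _ [_ [hG _]] oV.
pose VM h := exists m, V (h ** i m).
have oVM : T VM by apply: (open_bigcup hT) => m; exact: continuous_gmulr gtT (i m) V oV.
have cF : compact_set T (fun h => ~ VM h) by apply: compact_closed_subset cT (open_notnot oVM).
apply: open_ext (compact_closed htau hG (compact_image Hpc cF)) => g; split.
  move=> npF; have [h hg] := p_surj Hext g.
  have [m Vhm] : VM h by apply: NNPP => nVM; apply: npF; exists h.
  by exists (h ** i m); rewrite (pM Hext) (p_i Hext) gmulg1.
move=> [h0 [Vh0 <-]] [h [nVMh ph]].
have [m hm] := same_fiber Hext (esym ph).
by apply: nVMh; exists (- m); rewrite hm -gmulA -(iD Hext) subrr (i0 Hext) gmulg1.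
Qed.

Lemma open_subgroup_injective_p : exists U, T U /\ U (gone gH) /\
  (forall x y, U x -> U y -> U (x ** y)) /\ (forall x, U x -> U (ginv gH x)) /\
  (forall u v, U u -> U v -> p u = p v -> u = v).
Proof.
case: HT => _ [cT [hausT tdT]].
have [V [oV [V1 VM]]] := nbhd_meeting_M_trivially.
have [U [oU [U1 [Umul [Uinv UV]]]]] := open_subgroup_nbhd gtT cT hausT tdT oV V1.
exists U; do 4!split=> //; move=> u v Uu Uv puv.
have [m vm] := same_fiber Hext puv.
have m0 : m = 0 by apply/VM/UV; rewrite -(gmulKg gH u (i m)) -vm; apply/Umul/Uv/Uinv.
by rewrite vm m0 (i0 Hext) gmulg1.
Qed.

Section SectionFromOpenSubgroup.
Variable U : H -> Prop.
Hypotheses (oU : T U) (U1 : U (gone gH)).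
Hypotheses (Umul : forall x y, U x -> U y -> U (x ** y)) (Uinv : forall x, U x -> U (ginv gH x)).
Hypothesis Uinj : forall u v, U u -> U v -> p u = p v -> u = v.

Let PU g := exists u, U u /\ p u = g.

Let PU_open : tau PU.
Proof.
apply: open_ext (open_map_p oU) => g.
by split => -[u [Uu pu]]; exists u.
Qed.

Let PU1 : PU (gone gG). Proof. by exists (gone gH); rewrite (p1 Hext). Qed.

Let PUmul a b : PU a -> PU b -> PU (gm a b).
Proof.
by move=> [u [Uu <-]] [v [Uv <-]]; exists (u ** v); rewrite (pM Hext); split=> //; apply: Umul.
Qed.

Let PUinv a : PU a -> PU (ginv gG a).
Proof. by move=> [u [Uu <-]]; exists (ginv gH u); rewrite (pV Hext); split=> //; apply: Uinv. Qed.

Definition lift y := epsilon (inhabits (gone gH)) (fun u => U u /\ p u = y).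

Lemma lift_spec y : PU y -> U (lift y) /\ p (lift y) = y.
Proof. exact: (epsilon_spec (inhabits (gone gH)) (fun u => U u /\ p u = y)). Qed.

Definition coset g := fun g' => PU (gm (ginv gG g) g').

Lemma coset_eq a b : PU (gm (ginv gG a) b) -> coset a = coset b.
Proof.
move=> PUab; apply: pred_ext => x; rewrite /coset; split => PUx.
  have -> : gm (ginv gG b) x = gm (ginv gG (gm (ginv gG a) b)) (gm (ginv gG a) x).
    by rewrite ginvM ginvK -gmulA gmulKVg.
  exact/PUmul/PUx/PUinv.
have -> : gm (ginv gG a) x = gm (gm (ginv gG a) b) (gm (ginv gG b) x) by rewrite -gmulA gmulKVg.
exact: PUmul.
Qed.

Definition rep g := epsilon (inhabits (gone gH)) (fun h => coset (p h) = coset g).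

Lemma rep_coset g : PU (gm (ginv gG (p (rep g))) g).
Proof.
have cg : coset (p (rep g)) = coset g.
  apply: (epsilon_spec (inhabits (gone gH)) (fun h => coset (p h) = coset g)).
  by have [h <-] := p_surj Hext g; exists h.
have : coset g g by rewrite /coset gmulV; exact: PU1.
by rewrite -cg.
Qed.

Definition local_section g := rep g ** lift (gm (ginv gG (p (rep g))) g).

Lemma local_sectionK g : p (local_section g) = g.
Proof. by rewrite (pM Hext) (lift_spec (rep_coset g)).2 gmulKVg. Qed.

Lemma local_section_continuous : continuous_top tau T local_section.
Proof.
move=> W oW; apply: (open_local htau) => g0 Wg0.
pose r0 := rep g0; pose a := p r0.
pose Z y := exists u, (U u /\ W (r0 ** u)) /\ p u = y.
have oZ : tau Z.
  by apply: open_map_p; apply: (open_setI hT) => //; exact: continuous_gmull gtT r0 W oW.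
exists (fun g => PU (gm (ginv gG g0) g) /\ Z (gm (ginv gG a) g)); split.
  have gtau := profinite_topology_group Htau.
  by apply: (open_setI htau); [move: PU_open|move: oZ]; apply: (continuous_gmull gtau).
split.
  split; first by rewrite gmulV.
  by exists (lift (gm (ginv gG a) g0)); have [? ?] := lift_spec (rep_coset g0).
move=> g [PUg [u [[Uu Wu] pu]]].
have rg : rep g = r0 by rewrite /r0 /rep (coset_eq PUg).
rewrite /local_section rg -/a.
have PUa : PU (gm (ginv gG a) g) by rewrite /a -rg; apply: rep_coset.
have [Ul pl] := lift_spec PUa.
by rewrite (Uinj Ul Uu (etrans pl (esym pu))).
Qed.

End SectionFromOpenSubgroup.

Lemma continuous_section_exists :
  exists s, (forall g, p (s g) = g) /\ continuous_top tau T s.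
Proof.
have [U [oU [U1 [Umul [Uinv Uinj]]]]] := open_subgroup_injective_p.
exists (local_section U); split; first exact: local_sectionK.
exact: local_section_continuous.
Qed.

Section ContinuousSection.
Variable s : G -> H.
Hypotheses (Hs : forall g, p (s g) = g) (Hsc : continuous_top tau T s).

Lemma locally_constant_coord : locally_constant T (coord gH i p s).
Proof.
have [V [oV [V1 VM]]] := nbhd_meeting_M_trivially.
have coordE h : h ** ginv gH (s (p h)) = i (coord gH i p s h).
  by rewrite {1}(coord_decomp Hext Hs h) gmulgK.
move=> m; apply: (open_ext (U := fun h => V (i (- m) ** (h ** ginv gH (s (p h)))))).
  move=> h; rewrite coordE -(iD Hext); split => [/VM/eqP|<-].
    by rewrite addrC subr_eq0 => /eqP.
  by rewrite addNr (i0 Hext).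
have oVm : T (fun y => V (i (- m) ** y)) by exact: continuous_gmull gtT (i (- m)) V oV.
apply: (continuous_gmul gtT hT (@continuous_id _ T) _ oVm).
exact: continuous_comp (continuous_comp Hpc Hsc) (continuous_ginv gtT).
Qed.

Lemma topology_eq_section_top W : T W <-> section_top tau gH i s W.
Proof.
split=> [oW m|oW]; first exact: continuous_comp Hsc (continuous_gmull gtT (i m)) W oW.
apply: (open_ext (U := fun h => exists m, coord gH i p s h = m /\ W (i m ** s (p h)))).
  move=> h; split => [[m [<-]]|Wh]; first by rewrite -(coord_decomp Hext Hs).
  by exists (coord gH i p s h); rewrite -(coord_decomp Hext Hs).
apply: (open_bigcup hT) => m; apply: (open_setI hT); first exact: locally_constant_coord.
exact: Hpc (oW m).
Qed.

Lemma factor_set_continuous : continuous_2cochain tau (factor_set gH i p s).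
Proof.
have hP := prod_top_topology htau htau.
apply: (locally_constant_comp (psi := fun q : G * G => s q.1 ** s q.2)).
  apply: (continuous_gmul gtT hP).
    exact: continuous_comp (continuous_fst htau) Hsc.
  exact: continuous_comp (continuous_snd htau) Hsc.
exact: locally_constant_coord.
Qed.

End ContinuousSection.

End ProfiniteExtension.

Section TwistedProduct.
Variables (G : Type) (gG : group_on G) (M : finZmodType) (act : G -> M -> M).
Hypothesis Hmod : is_G_module gG act.
Variable f : G -> G -> M.
Hypothesis Hf : is_2cocycle gG act f.
Local Notation gm := (gmul gG).
Local Notation e := (gone gG).

Let cocycleE := proj1 (is_2cocycleP gG act f) Hf.

Lemma cocycle_1l k : f e k = f e e.
Proof.
by have := cocycleE e e k; rewrite !gmul1 (act1 Hmod) (addrC (f e e)) => /addrI.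
Qed.

Lemma cocycle_1r g : f g e = act g (f e e).
Proof. by have := cocycleE g e e; rewrite gmulg1 gmul1 => /addIr. Qed.

Definition twisted_mul (x y : M * G) : M * G :=
  (x.1 + act x.2 y.1 + f x.2 y.2, gm x.2 y.2).
Definition twisted_one : M * G := (- f e e, e).
Definition twisted_inv (x : M * G) : M * G :=
  (- f e e - act (ginv gG x.2) x.1 - f (ginv gG x.2) x.2, ginv gG x.2).

Lemma twisted_mulA x y z :
  twisted_mul x (twisted_mul y z) = twisted_mul (twisted_mul x y) z.
Proof.
case: x => a g; case: y => b h; case: z => k l; rewrite /twisted_mul /=.
congr pair; last by rewrite gmulA.
rewrite (actM Hmod) !(actD Hmod).
transitivity (a + act g b + act g (act h k) + (f g h + f (gm g h) l)).
  by rewrite cocycleE [LHS](AC (1*3*1) (1*2*3*(4*5))).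
by rewrite [LHS](AC (3*2) (1*2*4*3*5)).
Qed.

Lemma twisted_mul1 x : twisted_mul twisted_one x = x.
Proof.
case: x => b h; rewrite /twisted_mul /= (act1 Hmod) cocycle_1l gmul1.
by rewrite addrAC addNr add0r.
Qed.

Lemma twisted_mulV x : twisted_mul (twisted_inv x) x = twisted_one.
Proof.
case: x => a g; rewrite /twisted_mul /twisted_inv /twisted_one /= gmulV.
by rewrite (addrAC _ (- f _ _)) subrK subrK.
Qed.

Definition twisted_group : group_on (M * G) :=
  GroupOn twisted_mulA twisted_mul1 twisted_mulV.

(* Shifted by [f e e] so that [twisted_i 0] is the identity [twisted_one]. *)
Definition twisted_i (m : M) : M * G := (m - f e e, e).

Lemma twisted_extension : is_extension gG act twisted_group twisted_i snd.
Proof.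
split; first by move=> m n; rewrite /= /twisted_mul /= (act1 Hmod) gmul1 addrA subrK (addrAC m).
split; first by move=> m n [] /addIr.
split; first by [].
split; first by move=> g; exists (0, g).
split.
  move=> [a g] /=; split => [->|[m [_ ->]]] //.
  by exists (a + f e e); rewrite /twisted_i addrK.
move=> [a g] m.
suff -> : gmul twisted_group (a, g) (twisted_i m) =
          gmul twisted_group (twisted_i (act g m)) (a, g) by rewrite gmulgK.
rewrite /= /twisted_mul /twisted_i /= gmulg1 gmul1 cocycle_1l (cocycle_1r g) (act1 Hmod a).
by rewrite (actB Hmod) addrA subrK (addrAC (act g m)) subrK addrC.
Qed.

Definition zero_section (g : G) : M * G := (0, g).

Lemma zero_sectionK g : snd (zero_section g) = g. Proof. by []. Qed.

Lemma coord_zero_section a g : coord twisted_group twisted_i snd zero_section (a, g) = a.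
Proof.
have -> : (a, g) = gmul twisted_group (twisted_i a) (zero_section g).
  by rewrite /= /twisted_mul /= (act1 Hmod) cocycle_1l gmul1 addr0 subrK.
exact: (coord_ims twisted_extension zero_sectionK).
Qed.

Lemma factor_set_zero_section : factor_set twisted_group twisted_i snd zero_section = f.
Proof.
apply: functional_extensionality => g; apply: functional_extensionality => h.
by rewrite /factor_set /= /twisted_mul /= (act0 Hmod) !add0r coord_zero_section.
Qed.

End TwistedProduct.

Section MainTheorem.
Variables (G : Type) (gG : group_on G) (tau : topology G) (M : finZmodType).
Variable act : G -> M -> M.
Hypotheses (Htau : profinite_topology gG tau) (Hmod : is_G_module gG act).
Hypothesis Hcont : continuous_action tau act.

Lemma extension_topology_of_phi2_surjective :
  phi2_surjective gG tau act ->
  forall (H : Type) (gH : group_on H) (i : M -> H) (p : H -> G),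
    is_extension gG act gH i p ->
    exists T : topology H, profinite_topology gH T /\
      (forall U : G -> Prop, quotient_top T p U <-> tau U).
Proof.
move=> surj H gH i p Hext.
have [s0 Hs0] := section_exists Hext.
have [f [cf [_ [c fs0f]]]] := surj _ (factor_set_cocycle Hmod Hext Hs0).
pose s g := gmul gH (i (- c g)) (s0 g).
have Hs g : p (s g) = g by rewrite (p_ims Hext Hs0).
have fs : factor_set gH i p s = f.
  apply: functional_extensionality => g; apply: functional_extensionality => h.
  rewrite (factor_set_shift Hext _ Hs0) (coboundary1N Hmod) -fs0f.
  by rewrite opprB addrC subrK.
rewrite -fs in cf; exists (section_top tau gH i s).
split; first exact: (section_top_profinite Htau Hmod Hcont Hext Hs cf).
exact: (quotient_section_top tau Hext Hs).
Qed.

Lemma phi2_surjective_of_extension_topology :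
  (forall (H : Type) (gH : group_on H) (i : M -> H) (p : H -> G),
    is_extension gG act gH i p ->
    exists T : topology H, profinite_topology gH T /\
      (forall U : G -> Prop, quotient_top T p U <-> tau U)) ->
  phi2_surjective gG tau act.
Proof.
move=> ext_top f cf; have Hext := twisted_extension Hmod cf.
have [T [HT Tq]] := ext_top _ _ _ _ Hext.
have Hpc : continuous_top T tau snd by move=> V /Tq.
have [s [Hs Hsc]] := continuous_section_exists Htau Hext HT Hpc.
exists (factor_set (twisted_group Hmod cf) (twisted_i gG f) snd s).
split; first exact: (factor_set_continuous Htau Hext HT Hpc Hs Hsc).
split; first exact: (factor_set_cocycle Hmod Hext Hs).
exists (fun g => - coord (twisted_group Hmod cf) (twisted_i gG f) snd (zero_section M) (s g)).
move=> g h; rewrite (coboundary1N Hmod) (factor_set_change Hext Hs (zero_sectionK M)).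
by rewrite (factor_set_zero_section Hmod cf) opprD addrA subrr add0r.
Qed.

Lemma extension_iso_of_phi2_injective :
  phi2_injective gG tau act ->
  forall (H : Type) (gH : group_on H) (i : M -> H) (p : H -> G),
    is_extension gG act gH i p ->
    forall T1 T2 : topology H,
      profinite_topology gH T1 -> continuous_top T1 tau p ->
      profinite_topology gH T2 -> continuous_top T2 tau p ->
      exists f : H -> H,
        group_hom gH gH f /\ bijective f /\ continuous_top T1 T2 f /\
        (forall m, f (i m) = i m) /\ (forall h, p (f h) = p h).
Proof.
move=> inj H gH i p Hext T1 T2 HT1 Hp1 HT2 Hp2.
have [s1 [Hs1 Hsc1]] := continuous_section_exists Htau Hext HT1 Hp1.
have [s2 [Hs2 Hsc2]] := continuous_section_exists Htau Hext HT2 Hp2.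
have [|c [cc fs12]] := inj _ _ (factor_set_continuous Htau Hext HT1 Hp1 Hs1 Hsc1)
  (factor_set_cocycle Hmod Hext Hs1) (factor_set_continuous Htau Hext HT2 Hp2 Hs2 Hsc2)
  (factor_set_cocycle Hmod Hext Hs2).
  exists (fun g => coord gH i p s2 (s1 g)) => g h.
  by rewrite (factor_set_change Hext Hs1 Hs2) addrC addKr.
have {}fs12 g h : factor_set gH i p s1 g h =
    factor_set gH i p s2 g h + coboundary1 gG act c g h.
  by rewrite -fs12 addrC subrK.
exists (transport gH i p s1 s2 c).
split; first exact: (transport_hom Hmod Hext Hs1 Hs2 fs12).
split; first exact: (Bijective (transportK Hext c Hs1 Hs2) (transportKV Hext c Hs1 Hs2)).
have Fi := transport_i Hmod Hext Hs1 Hs2 fs12; have pF := p_transport Hext s1 c Hs2.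
split; last by split.
have hT1 : is_topology T1 by case: HT1 => -[].
move=> W /(topology_eq_section_top Hext HT2 Hp2 Hs2 Hsc2) oW.
apply: (continuous_to_section_top (phi := fun h => coord gH i p s1 h + c (p h)) hT1 _ Hp1 oW).
apply: (locally_constant_add hT1 (locally_constant_coord Hext HT1 Hp1 Hs1 Hsc1)).
exact: (locally_constant_comp Hp1 cc).
Qed.

Lemma phi2_injective_of_extension_iso :
  (forall (H : Type) (gH : group_on H) (i : M -> H) (p : H -> G),
    is_extension gG act gH i p ->
    (exists T0 : topology H, profinite_topology gH T0 /\ continuous_top T0 tau p) ->
    forall T1 T2 : topology H,
      profinite_topology gH T1 -> continuous_top T1 tau p ->
      profinite_topology gH T2 -> continuous_top T2 tau p ->
      exists f : H -> H,
        group_hom gH gH f /\ bijective f /\ continuous_top T1 T2 f /\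
        (forall m, f (i m) = i m) /\ (forall h, p (f h) = p h)) ->
  phi2_injective gG tau act.
Proof.
move=> ext_iso f1 f2 cf1 coc1 cf2 coc2 [c f12].
pose tG := twisted_group Hmod coc1; pose ti := twisted_i gG f1.
have Hext : is_extension gG act tG ti snd := twisted_extension Hmod coc1.
have Hs0 := zero_sectionK (G := G) M.
pose s g := gmul tG (ti (- c g)) (zero_section M g).
have Hs g : snd (s g) = g by rewrite (p_imul Hext).
have fs0 : factor_set tG ti snd (zero_section M) = f1 := factor_set_zero_section Hmod coc1.
have fs : factor_set tG ti snd s = f2.
  apply: functional_extensionality => g; apply: functional_extensionality => h.
  rewrite (factor_set_shift Hext _ Hs0) fs0 (coboundary1N Hmod) -f12.
  by rewrite opprB addrC subrK.
have cfs0 : continuous_2cochain tau (factor_set tG ti snd (zero_section M)) by rewrite fs0.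
have cfs : continuous_2cochain tau (factor_set tG ti snd s) by rewrite fs.
have HT1 := section_top_profinite Htau Hmod Hcont Hext Hs0 cfs0.
have HT2 := section_top_profinite Htau Hmod Hcont Hext Hs cfs.
have Hp1 := continuous_p_section_top (tau := tau) Hext Hs0.
have Hp2 := continuous_p_section_top (tau := tau) Hext Hs.
have [F [Fhom [_ [Fc [Fi pF]]]]] :=
  ext_iso _ _ _ _ Hext (ex_intro _ _ (conj HT1 Hp1)) _ _ HT1 Hp1 HT2 Hp2.
exists (fun g => coord tG ti snd s (F (zero_section M g))); split.
  apply: locally_constant_comp (locally_constant_coord_section_top Htau Hext Hs).
  exact: (continuous_comp (continuous_section_section_top Htau Hext Hs0) Fc).
move=> g h.
have := factor_set_change Hext (s1 := fun g => F (zero_section M g)) (fun g => pF _) Hs g h.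
rewrite (factor_set_hom Hext Hs0 Fhom Fi pF) fs0 fs => ->.
by rewrite addrC addKr.
Qed.

End MainTheorem.

Theorem mainTheorem17 (G : Type) (gG : group_on G) (tau : topology G)
  (Htau : profinite_topology gG tau)
  (M : finZmodType) (act : G -> M -> M)
  (Hmod : is_G_module gG act) (Hcont : continuous_action tau act) :
  (phi2_surjective gG tau act <->
     (forall (H : Type) (gH : group_on H) (i : M -> H) (p : H -> G),
        is_extension gG act gH i p ->
        exists T : topology H, profinite_topology gH T /\
          (forall U : G -> Prop, quotient_top T p U <-> tau U)))
  /\
  (phi2_injective gG tau act <->
     (forall (H : Type) (gH : group_on H) (i : M -> H) (p : H -> G),
        is_extension gG act gH i p ->
        (exists T0 : topology H, profinite_topology gH T0 /\
           continuous_top T0 tau p) ->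
        forall T1 T2 : topology H,
          profinite_topology gH T1 -> continuous_top T1 tau p ->
          profinite_topology gH T2 -> continuous_top T2 tau p ->
          exists f : H -> H,
            group_hom gH gH f /\ bijective f /\
            continuous_top T1 T2 f /\
            (forall m, f (i m) = i m) /\
            (forall h, p (f h) = p h))).
Proof.
split; split.
- exact: (extension_topology_of_phi2_surjective Htau Hmod Hcont).
- exact: (phi2_surjective_of_extension_topology Htau Hmod).
- move=> inj H gH i p Hext _.
  exact: (extension_iso_of_phi2_injective Htau Hmod inj Hext).
- exact: (phi2_injective_of_extension_iso Htau Hmod Hcont).
Qed.
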